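(* Regard spinors as vectors in the 4-dimensional Euclidean space $(\mathrm{Cl}^+(3),(\cdot,\cdot))$. Then: (i) $\{a_1a_1=1,\ a_1a_2\}$ is a set of simple roots of a root system of type $A_2$ contained in the $H_4$ root system $2I$; (ii) $\{a_1a_1=1,\ a_2a_3\}$ is a set of simple roots of a root system of type $H_2$ contained in $2I$; (iii) $\{a_1a_1,\ a_1a_2,\ a_1a_2a_3a_2a_3a_1a_2a_3,\ a_3a_2a_1a_3a_2a_1a_3a_2\}$ is a set of simple roots of a root system of type $D_4$ contained in $2I$. (Here products are geometric products, and a set of simple roots of the given type means its Cartan matrix $A_{ij}=2(\alpha_i,\alpha_j)/(\alpha_i,\alpha_i)$ is that of the given type and the root system generated from it by the reflections $s_R(X)=-R\tilde XR$ lies in $2I$.)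
   Context: $\mathrm{Cl}(3)$ is the real Clifford algebra of Euclidean $\mathbb{R}^3$ with orthonormal basis $e_1,e_2,e_3$ ($e_i^2=1$, $e_ie_j=-e_je_i$ for $i\neq j$). Its even subalgebra $\mathrm{Cl}^+(3)$ is spanned by $1,e_2e_3,e_3e_1,e_1e_2$ (spinors). Reversal $\tilde{\ }$ reverses the order of vector factors. The spinor inner product is $(R_1,R_2)=\tfrac12(R_1\tilde R_2+R_2\tilde R_1)$, making $\mathrm{Cl}^+(3)$ a 4D Euclidean space with orthonormal basis $1,e_2e_3,e_3e_1,e_1e_2$; for a unit spinor $R$ the reflection in the hyperplane orthogonal to $R$ is $s_R(X)=X-2(R,X)R=-R\tilde XR$. Root systems are finite sets of nonzero vectors spanning their span, containing only $\pm\alpha$ among multiples of each root $\alpha$, and closed under the reflections in their roots. Let $\tau=\frac{1+\sqrt5}{2}$. The $H_3$ simple roots are $a_1=e_2$, $a_2=\tfrac12(-\tau e_1-e_2-(\tau-1)e_3)$, $a_3=e_1$. The binary icosahedral group $2I$ is the set of all products of an even number of factors from $\{a_1,a_2,a_3\}$ (a group of order 120); viewed as 120 vectors in the 4D spinor space it is the $H_4$ root system. The Cartan matrices are $A_2$: $\begin{pmatrix}2&-1\\-1&2\end{pmatrix}$; $H_2$: $\begin{pmatrix}2&-\tau\\-\tau&2\end{pmatrix}$; $D_4$: the standard Cartan matrix of the $D_4$ Dynkin diagram (one central node joined by simple links to three others). *)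

(* The real Clifford algebra Cl(3), built concretely on the
   basis of blades e_A (A a subset of {1,2,3}, listed in increasing order). *)
From HB Require Import structures.
From mathcomp Require Import all_boot all_order all_algebra.
Set Implicit Arguments. Unset Strict Implicit. Unset Printing Implicit Defensive.
Import Order.TTheory GRing.Theory Num.Theory.
Local Open Scope ring_scope.

Section Cl3.
Variable R : rcfType.

(* multivectors: coefficient of each blade e_A, A : {set 'I_3}
   (index 0,1,2 stand for e_1,e_2,e_3) *)
Definition mv := {ffun {set 'I_3} -> R}.

Definition symd (A B : {set 'I_3}) : {set 'I_3} := (A :\: B) :|: (B :\: A).

(* e_A e_B = bsign A B * e_(A symd B): one sign per inversion (i in A, j in B, j < i),
   using e_i^2 = 1 and e_i e_j = - e_j e_i *)
Definition bsign (A B : {set 'I_3}) : R :=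
  (-1) ^+ #|[set p in setX A B | (p.2 < p.1)%N]|.

Definition gp (x y : mv) : mv :=
  [ffun C => \sum_(A : {set 'I_3}) bsign A (symd A C) * x A * y (symd A C)].

Definition mv1 : mv := [ffun A : {set 'I_3} => (A == set0)%:R].

Definition prodl (s : seq mv) : mv := foldr gp mv1 s.

Definition rev (x : mv) : mv := [ffun A : {set 'I_3} => (-1) ^+ 'C(#|A|, 2) * x A].

Definition vec (x y z : R) : mv :=
  [ffun A : {set 'I_3} => if A == [set inord 0] then x
             else if A == [set inord 1] then y
             else if A == [set inord 2] then z else 0].

Definition sip (X Y : mv) : R := (gp X (rev Y) set0 + gp Y (rev X) set0) / 2.

Definition srefl (Rr X : mv) : mv := - gp (gp Rr (rev X)) Rr.

Definition tau : R := (1 + Num.sqrt 5) / 2.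

Definition a1 : mv := vec 0 1 0.
Definition a2 : mv := vec (- tau / 2) (- 1 / 2) (- (tau - 1) / 2).
Definition a3 : mv := vec 1 0 0.
Definition asimple (i : 'I_3) : mv :=
  if i == inord 0 then a1 else if i == inord 1 then a2 else a3.

Inductive in2I : mv -> Prop :=
  | in2I_one : in2I mv1
  | in2I_step (i j : 'I_3) (X : mv) :
      in2I X -> in2I (gp (asimple i) (gp (asimple j) X)).

Inductive gen_roots (n : nat) (alpha : 'I_n -> mv) : mv -> Prop :=
  | gen_base (i : 'I_n) : gen_roots alpha (alpha i)
  | gen_refl (r x : mv) :
      gen_roots alpha r -> gen_roots alpha x -> gen_roots alpha (srefl r x).

Definition cartan (n : nat) (alpha : 'I_n -> mv) : 'M[R]_n :=
  \matrix_(i, j) (2 * sip (alpha i) (alpha j) / sip (alpha i) (alpha i)).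

Definition simple_roots_in_2I (n : nat) (alpha : 'I_n -> mv) (C : 'M[R]_n) : Prop :=
  cartan alpha = C /\ (forall X, gen_roots alpha X -> in2I X).

Definition cartanA2 : 'M[R]_2 := \matrix_(i, j) (if i == j then 2 else -1).
Definition cartanH2 : 'M[R]_2 := \matrix_(i, j) (if i == j then 2 else - tau).
(* D4, with node 0 the central node joined to nodes 1, 2, 3 *)
Definition cartanD4 : 'M[R]_4 :=
  \matrix_(i, j) (if i == j then 2
                  else if (i == inord 0) || (j == inord 0) then -1 else 0).

Definition roots_of (n : nat) (s : seq mv) (i : 'I_n) : mv := nth mv1 s i.

End Cl3.

From Pilot Require Import Defs.
From HB Require Import structures.
From mathcomp Require Import all_boot all_order all_algebra ring.
Import Order.TTheory GRing.Theory Num.Theory.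
Local Open Scope ring_scope.

(* Since s_R(X) = - R X~ R, the set 2I
   is stable under the reflections in its elements: it is closed under
   products, under reversal (which reverses a product of the vectors a_i), and
   contains -1 = (a1 a3)^2.  Hence the root system generated by simple roots
   lying in 2I stays in 2I.  Written as quaternions w + x e1e2 + y e1e3 + z e2e3,
   the proposed simple roots are unit vectors whose inner products, reduced
   with tau^2 = tau + 1, give the Cartan matrices. *)

Local Notation rev := Defs.rev.

Lemma big_pair (V : Type) (idx : V) (op : Monoid.com_law idx) (I J : finType)
    (F : I * J -> V) :
  \big[op/idx]_p F p = \big[op/idx]_i \big[op/idx]_j F (i, j).
Proof. by rewrite pair_bigA; apply: eq_bigr => -[]. Qed.

Section Spinors.
Variable R : rcfType.
Local Notation mv := (mv R).
Local Notation tau := (tau R).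
Local Notation mv1 := (mv1 R).
Local Notation a1 := (a1 R).
Local Notation a2 := (a2 R).
Local Notation a3 := (a3 R).
Local Notation asimple := (asimple R).

Definition bits := (bool * bool * bool)%type.

Definition blade (b : bits) : {set 'I_3} :=
  [set i : 'I_3 | nth false [:: b.1.1; b.1.2; b.2] i].

Definition bits_of (A : {set 'I_3}) : bits :=
  (inord 0 \in A, inord 1 \in A, inord 2 \in A).

Lemma bits_ofK : cancel bits_of blade.
Proof.
move=> A; apply/setP => i; rewrite inE /bits_of.
by case: i => [[|[|[|?]]] ?] //=; congr (_ \in A); apply: val_inj; rewrite /= inordK.
Qed.

Lemma bladeK : cancel blade bits_of.
Proof. by case=> [[b1 b2] b3]; rewrite /bits_of !inE !inordK. Qed.

Definition bxor (b c : bits) : bits :=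
  (xorb b.1.1 c.1.1, xorb b.1.2 c.1.2, xorb b.2 c.2).

Definition bits_sign (b c : bits) : R :=
  (-1) ^+ (b.1.2 * c.1.1 + b.2 * c.1.1 + b.2 * c.1.2)%N.

Lemma symd_blade b c : symd (blade b) (blade c) = blade (bxor b c).
Proof.
apply/setP => i; rewrite !inE.
by case: i => [[|[|[|?]]] Hi] //=; case: b c => [[[] []] []] [[[] []] []].
Qed.

Lemma bsign_blade b c : bsign R (blade b) (blade c) = bits_sign b c.
Proof.
rewrite /bsign /bits_sign -sum1_card big_mkcond /=.
under eq_bigr => p _ do rewrite !inE.
rewrite big_pair !big_ord_recl !big_ord0 /=.
by case: b c => [[[] []] []] [[[] []] []].
Qed.

Definition sum_bits (F : bits -> R) : R :=
  F (false, false, false) + F (true, false, false) + F (false, true, false) +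
  F (true, true, false) + F (false, false, true) + F (true, false, true) +
  F (false, true, true) + F (true, true, true).

Lemma sum_blades (F : {set 'I_3} -> R) : \sum_A F A = sum_bits (fun b => F (blade b)).
Proof.
rewrite (reindex blade); last by exists bits_of => ? _; [exact: bladeK | exact: bits_ofK].
by rewrite !big_pair !big_bool /sum_bits /=; ring.
Qed.

Lemma gp_blade (x y : mv) c : gp x y (blade c) =
  sum_bits (fun b => bits_sign b (bxor b c) * x (blade b) * y (blade (bxor b c))).
Proof. by rewrite ffunE sum_blades /sum_bits; cbv beta; rewrite !symd_blade !bsign_blade. Qed.

Lemma mvP (x y : mv) : (forall b, x (blade b) = y (blade b)) -> x = y.
Proof. by move=> Exy; apply/ffunP => A; rewrite -(bits_ofK A). Qed.

Definition bits_index (b : bits) : nat := (b.1.1 + 2 * b.1.2 + 4 * b.2)%N.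

(* [s] lists the coordinates on 1, e1, e2, e1e2, e3, e1e3, e2e3, e1e2e3. *)
Definition mv_of_seq (s : seq R) : mv := [ffun A => nth 0 s (bits_index (bits_of A))].

Lemma mv_of_seq_blade s b : mv_of_seq s (blade b) = nth 0 s (bits_index b).
Proof. by rewrite ffunE bladeK. Qed.

Lemma set0_blade : set0 = blade (false, false, false).
Proof. by apply/setP => i; rewrite !inE; case: i => [[|[|[|?]]] ?]. Qed.

Lemma set1_blade (k : nat) : (k < 3)%N ->
  [set inord k] = blade (k == 0, k == 1, k == 2)%N.
Proof.
move=> k3; apply/setP => i; rewrite !inE -val_eqE /= inordK //.
by case: i => [[|[|[|?]]] ?]; case: k k3 => [|[|[|?]]].
Qed.

Lemma vec_mv_of_seq (x y z : R) : vec x y z = mv_of_seq [:: 0; x; y; 0; z; 0; 0; 0].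
Proof.
apply: mvP => b; rewrite ffunE mv_of_seq_blade !set1_blade // !(inj_eq (can_inj bladeK)).
by case: b => [[[] []] []].
Qed.

Lemma mv1_mv_of_seq : mv1 = mv_of_seq [:: 1; 0; 0; 0; 0; 0; 0; 0].
Proof.
apply: mvP => b; rewrite ffunE mv_of_seq_blade set0_blade (inj_eq (can_inj bladeK)).
by case: b => [[[] []] []].
Qed.

(* Reversing e_A takes as many transpositions as e_A e_A has inversions. *)
Lemma rev_blade (x : mv) b : rev x (blade b) = bits_sign b b * x (blade b).
Proof.
rewrite ffunE /bits_sign cardsE -sum1_card big_mkcond /= !big_ord_recl big_ord0 /=.
by case: b => [[[] []] []]; rewrite /= ?bin2.
Qed.

Lemma gpA (x y z : mv) : gp (gp x y) z = gp x (gp y z).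
Proof.
apply: mvP => -[[[] []] []]; rewrite !gp_blade /sum_bits; cbv beta.
all: by rewrite !gp_blade /sum_bits /bits_sign /=; ring.
Qed.

Lemma gp1l (x : mv) : gp mv1 x = x.
Proof.
apply: mvP => -[[[] []] []]; rewrite gp_blade mv1_mv_of_seq /sum_bits; cbv beta.
all: by rewrite !mv_of_seq_blade /bits_sign /=; ring.
Qed.

Lemma gp1r (x : mv) : gp x mv1 = x.
Proof.
apply: mvP => -[[[] []] []]; rewrite gp_blade mv1_mv_of_seq /sum_bits; cbv beta.
all: by rewrite !mv_of_seq_blade /bits_sign /=; ring.
Qed.

Lemma gpNl (x y : mv) : gp (- x) y = - gp x y.
Proof.
by apply/ffunP => C; rewrite !ffunE -sumrN; apply: eq_bigr => A _; rewrite ffunE mulrN mulNr.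
Qed.

Lemma revM (x y : mv) : rev (gp x y) = gp (rev y) (rev x).
Proof.
apply: mvP => -[[[] []] []]; rewrite rev_blade !gp_blade /sum_bits; cbv beta.
all: by rewrite !rev_blade /bits_sign /=; ring.
Qed.

Lemma rev_vec (x y z : R) : rev (vec x y z) = vec x y z.
Proof.
apply: mvP => -[[[] []] []]; rewrite rev_blade !vec_mv_of_seq !mv_of_seq_blade.
all: by rewrite /bits_sign /=; ring.
Qed.

(* e_A e_A~ = 1 for every blade A. *)
Lemma sip_coord (X Y : mv) : sip X Y = sum_bits (fun b => X (blade b) * Y (blade b)).
Proof.
rewrite /sip set0_blade !gp_blade /sum_bits; cbv beta.
by rewrite !rev_blade /bits_sign /=; field.
Qed.

Definition spinor (w x y z : R) : mv := mv_of_seq [:: w; 0; 0; x; 0; y; z; 0].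

Lemma mv1_spinor : mv1 = spinor 1 0 0 0.
Proof. exact: mv1_mv_of_seq. Qed.

Lemma prodl_cons2 (x y : mv) s : prodl (x :: y :: s) = gp (gp x y) (prodl s).
Proof. by rewrite /= gpA. Qed.

Lemma prodl_nil : prodl [::] = spinor 1 0 0 0 :> mv.
Proof. exact: mv1_spinor. Qed.

Lemma gp_vec (u1 u2 u3 v1 v2 v3 : R) : gp (vec u1 u2 u3) (vec v1 v2 v3) =
  spinor (u1 * v1 + u2 * v2 + u3 * v3) (u1 * v2 - u2 * v1) (u1 * v3 - u3 * v1)
    (u2 * v3 - u3 * v2).
Proof.
apply: mvP => -[[[] []] []]; rewrite gp_blade !vec_mv_of_seq /sum_bits; cbv beta.
all: by rewrite !mv_of_seq_blade /bits_sign /=; ring.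
Qed.

Lemma gp_spinor (w x y z w' x' y' z' : R) : gp (spinor w x y z) (spinor w' x' y' z') =
  spinor (w * w' - x * x' - y * y' - z * z') (w * x' + x * w' - y * z' + z * y')
    (w * y' + y * w' + x * z' - z * x') (w * z' + z * w' - x * y' + y * x').
Proof.
apply: mvP => -[[[] []] []]; rewrite gp_blade /spinor /sum_bits; cbv beta.
all: by rewrite !mv_of_seq_blade /bits_sign /=; ring.
Qed.

Lemma sip_spinor (w x y z w' x' y' z' : R) :
  sip (spinor w x y z) (spinor w' x' y' z') = w * w' + x * x' + y * y' + z * z'.
Proof. by rewrite sip_coord /spinor /sum_bits !mv_of_seq_blade /=; ring. Qed.

Lemma spinorN (w x y z : R) : - spinor w x y z = spinor (- w) (- x) (- y) (- z).
Proof.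
by apply: mvP => -[[[] []] []]; rewrite ffunE !mv_of_seq_blade /= ?oppr0.
Qed.

Lemma rev_spinor (w x y z : R) : rev (spinor w x y z) = spinor w (- x) (- y) (- z).
Proof.
apply: mvP => -[[[] []] []]; rewrite rev_blade !mv_of_seq_blade /=.
all: by rewrite /bits_sign /=; ring.
Qed.

Lemma asimple_rev i : rev (asimple i) = asimple i.
Proof. by rewrite /asimple; case: ifP => _; [|case: ifP => _]; apply: rev_vec. Qed.

Lemma exists_asimple (x : mv) : x \in [:: a1; a2; a3] -> exists i, x = asimple i.
Proof.
rewrite !inE => /or3P[]/eqP->; [exists (inord 0) | exists (inord 1) | exists (inord 2)];
  by rewrite /asimple -!val_eqE /= !inordK.
Qed.

Lemma in2I_gp (X Y : mv) : in2I X -> in2I Y -> in2I (gp X Y).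
Proof.
move=> hX hY; elim: hX => [|i j X' _ IH]; first by rewrite gp1l.
by rewrite !gpA; apply: in2I_step.
Qed.

Lemma in2I_rev (X : mv) : in2I X -> in2I (rev X).
Proof.
elim=> [|i j Y _ IH].
  by rewrite mv1_spinor rev_spinor !oppr0 -mv1_spinor; apply: in2I_one.
rewrite !revM !asimple_rev gpA; apply: in2I_gp => //.
by rewrite -[asimple i]gp1r; apply: in2I_step; apply: in2I_one.
Qed.

Lemma in2I_prodl (s : seq mv) :
  all (mem [:: a1; a2; a3]) s -> ~~ odd (size s) -> in2I (prodl s).
Proof.
elim: {s}(size s).+1 {-2}s (ltnSn (size s)) => // n IH [|x [|y s]] //= lt_s.
  by move=> _ _; apply: in2I_one.
case/and3P=> /exists_asimple[i ->] /exists_asimple[j ->] s_simple; rewrite negbK => even_s.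
by apply: in2I_step; apply: IH => //; apply: ltnW.
Qed.

Lemma in2I_opp (X : mv) : in2I X -> in2I (- X).
Proof.
move=> hX; have -> : - X = gp (prodl [:: a1; a3; a1; a3]) X.
  rewrite !prodl_cons2 prodl_nil /a1 /a3 !gp_vec !gp_spinor.
  rewrite -[X in LHS]gp1l -gpNl mv1_spinor spinorN.
  by congr (gp (spinor _ _ _ _) X); ring.
by apply: in2I_gp => //; apply: in2I_prodl; rewrite //= !inE !eqxx ?orbT.
Qed.

Lemma in2I_srefl (r X : mv) : in2I r -> in2I X -> in2I (srefl r X).
Proof. by move=> hr hX; apply/in2I_opp/in2I_gp => //; apply/in2I_gp/in2I_rev. Qed.

Lemma gen_roots_in2I n (alpha : 'I_n -> mv) :
  (forall i, in2I (alpha i)) -> forall X, gen_roots alpha X -> in2I X.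
Proof. by move=> alpha2I X; elim=> [i | r Y _ hr _ hY]; [exact: alpha2I | exact: in2I_srefl]. Qed.

Lemma in2I_roots_of n (s : seq mv) :
  {in s, forall X, in2I X} -> forall i : 'I_n, in2I (roots_of s i).
Proof.
move=> s2I i; rewrite /roots_of; have [lt_i | le_i] := ltnP i (size s).
  by apply: s2I; apply: mem_nth.
by rewrite nth_default //; apply: in2I_one.
Qed.

Lemma tau_sqr : tau ^+ 2 = tau + 1.
Proof.
have sqrt5 : Num.sqrt (5 : R) ^+ 2 = 5 by rewrite sqr_sqrtr // ler0n.
by rewrite /tau expr_div_n sqrrD sqrt5; field.
Qed.

Ltac spinor_prodl :=
  rewrite !prodl_cons2 prodl_nil /a1 /a2 /a3 !gp_vec !gp_spinor; congr spinor; field: tau_sqr.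

Lemma prodl_a1a1 : prodl [:: a1; a1] = spinor 1 0 0 0.
Proof. by spinor_prodl. Qed.

Lemma prodl_a1a2 : prodl [:: a1; a2] = spinor (- 1 / 2) (tau / 2) 0 ((1 - tau) / 2).
Proof. by spinor_prodl. Qed.

Lemma prodl_a2a3 : prodl [:: a2; a3] = spinor (- tau / 2) (1 / 2) ((tau - 1) / 2) 0.
Proof. by spinor_prodl. Qed.

Lemma prodl_a1a2a3a2a3a1a2a3 :
  prodl [:: a1; a2; a3; a2; a3; a1; a2; a3] =
  spinor (- 1 / 2) (- 1 / 2) (1 / 2) (- 1 / 2).
Proof. by spinor_prodl. Qed.

Lemma prodl_a3a2a1a3a2a1a3a2 :
  prodl [:: a3; a2; a1; a3; a2; a1; a3; a2] =
  spinor (- 1 / 2) ((1 - tau) / 2) (- tau / 2) 0.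
Proof. by spinor_prodl. Qed.

Lemma cartan_unit n (alpha : 'I_n -> mv) : (forall i, sip (alpha i) (alpha i) = 1) ->
  cartan alpha = \matrix_(i, j) (2 * sip (alpha i) (alpha j)).
Proof. by move=> unit_alpha; apply/matrixP => i j; rewrite !mxE unit_alpha divr1. Qed.

Lemma cartan_A2 :
  cartan (roots_of [:: prodl [:: a1; a1]; prodl [:: a1; a2]]) = cartanA2 R.
Proof.
rewrite prodl_a1a1 prodl_a1a2 cartan_unit; last first.
  by case=> [[|[|?]] ?] //=; rewrite sip_spinor; field: tau_sqr.
apply/matrixP => i j; rewrite !mxE.
by case: i j => [[|[|?]] ?] [[|[|?]] ?] //=; rewrite !sip_spinor; field: tau_sqr.
Qed.

Lemma cartan_H2 :
  cartan (roots_of [:: prodl [:: a1; a1]; prodl [:: a2; a3]]) = cartanH2 R.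
Proof.
rewrite prodl_a1a1 prodl_a2a3 cartan_unit; last first.
  by case=> [[|[|?]] ?] //=; rewrite sip_spinor; field: tau_sqr.
apply/matrixP => i j; rewrite !mxE.
by case: i j => [[|[|?]] ?] [[|[|?]] ?] //=; rewrite !sip_spinor; field: tau_sqr.
Qed.

Lemma cartan_D4 :
  cartan (roots_of
    [:: prodl [:: a1; a1]; prodl [:: a1; a2];
        prodl [:: a1; a2; a3; a2; a3; a1; a2; a3];
        prodl [:: a3; a2; a1; a3; a2; a1; a3; a2]]) = cartanD4 R.
Proof.
rewrite prodl_a1a1 prodl_a1a2 prodl_a1a2a3a2a3a1a2a3 prodl_a3a2a1a3a2a1a3a2 cartan_unit; last first.
  by case=> [[|[|[|[|?]]]] ?] //=; rewrite sip_spinor; field: tau_sqr.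
apply/matrixP => i j; rewrite !mxE -!val_eqE /= inordK //.
by case: i j => [[|[|[|[|?]]]] ?] [[|[|[|[|?]]]] ?] //=; rewrite !sip_spinor; field: tau_sqr.
Qed.

Lemma simple_roots_in_2I_intro n (s : seq mv) C :
  cartan (roots_of s) = C -> {in s, forall X, in2I X} ->
  simple_roots_in_2I (roots_of (n := n) s) C.
Proof. by move=> cartanE s2I; split=> //; apply/gen_roots_in2I/in2I_roots_of. Qed.

End Spinors.

Theorem mainTheorem2 (R : rcfType) :
  simple_roots_in_2I (@roots_of R 2 [:: prodl [:: a1 R; a1 R]; prodl [:: a1 R; a2 R]])
    (cartanA2 R)
  /\ simple_roots_in_2I (@roots_of R 2 [:: prodl [:: a1 R; a1 R]; prodl [:: a2 R; a3 R]])
    (cartanH2 R)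
  /\ simple_roots_in_2I
    (@roots_of R 4
      [:: prodl [:: a1 R; a1 R];
          prodl [:: a1 R; a2 R];
          prodl [:: a1 R; a2 R; a3 R; a2 R; a3 R; a1 R; a2 R; a3 R];
          prodl [:: a3 R; a2 R; a1 R; a3 R; a2 R; a1 R; a3 R; a2 R]])
    (cartanD4 R).
Proof.
split; [|split]; apply: simple_roots_in_2I_intro.
- exact: cartan_A2.
- by move=> X; rewrite !inE => /orP[]/eqP->; apply: in2I_prodl; rewrite //= !inE !eqxx ?orbT.
- exact: cartan_H2.
- by move=> X; rewrite !inE => /orP[]/eqP->; apply: in2I_prodl; rewrite //= !inE !eqxx ?orbT.
- exact: cartan_D4.
- by move=> X; rewrite !inE => /or4P[]/eqP->; apply: in2I_prodl; rewrite //= !inE !eqxx ?orbT.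
Qed.
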